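(* Let $G=(V,E,C,\ell)$ be an edge-labeled hypergraph with $C=\{1,\dots,k\}$, $k\ge 2$, and maximum hyperedge size $r\ge 2$. Let $(x_v^c,x_e)$ be an optimal solution of the linear program \[ \min \sum_{e\in E} x_e \quad\text{s.t.}\quad \sum_{c=1}^k x_v^c=k-1\ \ \forall v\in V;\qquad x_v^c\le x_e\ \ \forall c\in C,\ \forall e\in E\text{ with }\ell(e)=c,\ \forall v\in e;\qquad 0\le x_v^c\le 1,\ 0\le x_e\le 1. \] Given a parameter $t\in[1/2,2/3]$, define a random clustering $Y$ as follows: draw a uniformly random permutation of $C$, regarded as a priority order on the categories; for each $c$ let $S_c=\{v\in V: x_v^c<t\}$; each node $v$ belonging to at least one $S_c$ is assigned to the highest-priority category $c$ with $v\in S_c$; every node lying in no $S_c$ is assigned to an arbitrary category. Then: if $t=k/(2k-1)$, $\mathbb{E}[\mathrm{CatEdgeClus}(Y)]\le (2-1/k)\cdot\min_{Y'}\mathrm{CatEdgeClus}(Y')$; and if $t=(r+1)/(2r+1)$, $\mathbb{E}[\mathrm{CatEdgeClus}(Y)]\le (2-1/(r+1))\cdot\min_{Y'}\mathrm{CatEdgeClus}(Y')$, where the minima range over all clusterings $Y':V\to C$.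
   Context: An edge-labeled hypergraph $G=(V,E,C,\ell)$ consists of a finite node set $V$, a finite collection $E$ of hyperedges (nonempty subsets of $V$), a finite set $C$ of categories, and a labeling $\ell:E\to C$; the maximum hyperedge size is $r=\max_{e\in E}|e|$. A clustering is a map $Y:V\to C$. For $e\in E$, $m_Y(e)=1$ if $Y[i]\neq\ell(e)$ for some $i\in e$, and $m_Y(e)=0$ otherwise; $\mathrm{CatEdgeClus}(Y)=\sum_{e\in E}m_Y(e)$. *)

From HB Require Import structures.
From mathcomp Require Import all_boot all_order all_algebra all_fingroup.
Set Implicit Arguments. Unset Strict Implicit. Unset Printing Implicit Defensive.
Import Order.TTheory GRing.Theory Num.Theory.
Local Open Scope ring_scope.

(* An edge-labeled hypergraph with node set V (finType), hyperedges indexed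
   by the finType E (so E may be a multiset of node sets), [edge e] the node
   set of hyperedge e, categories C = 'I_k and labels [lab e]. *)

Definition max_edge_size (V E : finType) (edge : E -> {set V}) : nat :=
  \max_(e : E) #|edge e|.

Definition mY (V E : finType) (k : nat) (edge : E -> {set V}) (lab : E -> 'I_k)
  (Y : V -> 'I_k) (e : E) : nat :=
  if [exists v in edge e, Y v != lab e] then 1%N else 0%N.

Definition CatEdgeClus (V E : finType) (k : nat) (edge : E -> {set V})
  (lab : E -> 'I_k) (Y : V -> 'I_k) : nat :=
  (\sum_(e : E) mY edge lab Y e)%N.

Definition LP_feasible (R : realFieldType) (V E : finType) (k : nat)
  (edge : E -> {set V}) (lab : E -> 'I_k)
  (x : V -> 'I_k -> R) (xe : E -> R) : Prop :=
  [/\ (forall v, \sum_(c : 'I_k) x v c = (k - 1)%:R),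
      (forall e v, v \in edge e -> x v (lab e) <= xe e),
      (forall v c, 0 <= x v c <= 1) &
      (forall e, 0 <= xe e <= 1)].

Definition LP_optimal (R : realFieldType) (V E : finType) (k : nat)
  (edge : E -> {set V}) (lab : E -> 'I_k)
  (x : V -> 'I_k -> R) (xe : E -> R) : Prop :=
  LP_feasible edge lab x xe /\
  forall x' xe', LP_feasible edge lab x' xe' ->
    \sum_(e : E) xe e <= \sum_(e : E) xe' e.

(* The rounding: given a priority permutation s (category c has higher
   priority than c' iff s c < s c'), a threshold t and a fallback assignment
   dflt for nodes in no S_c, node v goes to the highest-priority c with
   x v c < t. *)
Definition round_clustering (R : realFieldType) (V : finType) (k : nat)
  (x : V -> 'I_k -> R) (t : R) (dflt : V -> 'I_k) (s : {perm 'I_k})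
  (v : V) : 'I_k :=
  match [pick c : 'I_k | (x v c < t) &&
           [forall c' : 'I_k, (x v c' < t) ==> (s c <= s c')%N]] with
  | Some c => c
  | None => dflt v
  end.

(* Expected cost over a uniformly random permutation of the categories;
   the arbitrary assignment of uncovered nodes may depend on the permutation. *)
Definition expected_cost (R : realFieldType) (V E : finType) (k : nat)
  (edge : E -> {set V}) (lab : E -> 'I_k)
  (x : V -> 'I_k -> R) (t : R) (dflt : {perm 'I_k} -> V -> 'I_k) : R :=
  (k`!%:R)^-1 * \sum_(s : {perm 'I_k})
     (CatEdgeClus edge lab (round_clustering x t (dflt s) s))%:R.

From HB Require Import structures.
From mathcomp Require Import all_boot all_order all_algebra all_fingroup.
From mathcomp Require Import ring lra zify.
Set Implicit Arguments. Unset Strict Implicit. Unset Printing Implicit Defensive.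
Import Order.TTheory GRing.Theory Num.Theory.
Local Open Scope ring_scope.

(* For an edge e with x_e < t, let D be the set of categories c such that some
   node of e lies in S_c. D contains the label of e, and e is uncut whenever the
   label has the highest priority in D, which happens for at least k!/|D| of
   the permutations. If D contains a second category, then x_e > 1 - t since
   the values 1 - x_v^c sum to 1 at every node v. Hence, for t = n/(2n - 1) and
   |D| <= n, the cut probability is at most 1 - 1/n = (2 - 1/n)(1 - t), hence
   at most (2 - 1/n) x_e; when x_e >= t it is at most 1 = (2 - 1/n) t. Always
   |D| <= k, and |D| <= r + 1 when t <= 2/3: a node lying in S_c for two
   categories other than the label would make three of the values 1 - x_v^c
   exceed 1/3. Summing over the edges bounds the expected cost by (2 - 1/n)
   times the LP value, which is at most the cost of any clustering. *)

Section FirstIn.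
Variables (k : nat) (D : {set 'I_k}).

Definition first_in (c : 'I_k) : {set {perm 'I_k}} :=
  [set s : {perm 'I_k} | [forall d in D, (s c <= s d)%N]].

Lemma card_first_in_le b c : b \in D -> c \in D ->
  (#|first_in b| <= #|first_in c|)%N.
Proof.
move=> bD cD; rewrite -(card_imset (first_in b) (mulgI (tperm b c))).
apply: subset_leq_card; apply/subsetP => s' /imsetP [s].
rewrite inE => /forallP s_first ->.
rewrite inE; apply/forallP => d; apply/implyP => dD.
rewrite !permM tpermR.
case: (eqVneq d b) => [->|db]; first by rewrite tpermL (implyP (s_first c)).
case: (eqVneq d c) => [->|dc]; first by rewrite tpermR.
by rewrite tpermD 1?eq_sym // (implyP (s_first d)).
Qed.

Lemma fact_le_card_first_in c : c \in D -> (k`! <= #|D| * #|first_in c|)%N.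
Proof.
move=> cD; apply: (@leq_trans (\sum_(b in D) #|first_in b|)); last first.
  by rewrite -sum_nat_const; apply: leq_sum => b bD; apply: card_first_in_le.
have -> : (\sum_(b in D) #|first_in b|
           = \sum_(s : {perm 'I_k}) \sum_(b in D) (s \in first_in b))%N.
  rewrite exchange_big /=; apply: eq_bigr => b _.
  by rewrite -sum1_card big_mkcond; apply: eq_bigr => s _; case: (s \in _).
rewrite -card_Sn -sum1_card; apply: leq_sum => s _.
case: (arg_minnP (fun b => s b) cD) => b bD b_min.
rewrite (bigD1 b) //= inE.
by have -> : [forall d in D, (s b <= s d)%N] by apply/forall_inP.
Qed.

End FirstIn.

Definition threshold (R : realFieldType) (n : nat) : R := n%:R / (2 * n - 1)%:R.

Definition approx_ratio (R : realFieldType) (n : nat) : R := 2 - 1 / n%:R.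

Section Threshold.
Variables (R : realFieldType) (n : nat).
Hypothesis n_gt0 : (0 < n)%N.

Let n_ge1 : 1 <= n%:R :> R.
Proof. by rewrite ler1n. Qed.

Let thresholdE : threshold R n = n%:R / (2 * n%:R - 1).
Proof. by rewrite /threshold natrB ?natrM // muln_gt0. Qed.

Lemma approx_ratio_ge1 : 1 <= approx_ratio R n.
Proof.
have : 1 / n%:R <= 1 :> R by rewrite ler_pdivrMr ?ltr0n // mul1r n_ge1.
by rewrite /approx_ratio; lra.
Qed.

Lemma approx_ratio_threshold : approx_ratio R n * threshold R n = 1.
Proof.
have := n_ge1; rewrite /approx_ratio thresholdE => ?; field.
by apply/andP; split; apply/eqP => h; lra.
Qed.

Lemma approx_ratio_one_sub_threshold :
  approx_ratio R n * (1 - threshold R n) = 1 - 1 / n%:R.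
Proof.
have := n_ge1; rewrite /approx_ratio thresholdE => ?; field.
by apply/andP; split; apply/eqP => h; lra.
Qed.

Lemma natr_le_one_sub_inv_mul m K : (n * m <= n.-1 * K)%N ->
  m%:R <= (1 - 1 / n%:R) * K%:R :> R.
Proof.
move=> nm; have n_pos : 0 < n%:R :> R by rewrite ltr0n.
rewrite -(ler_pM2l n_pos) -natrM.
have -> : n%:R * ((1 - 1 / n%:R) * K%:R) = (n.-1 * K)%:R :> R.
  by rewrite natrM -subn1 natrB //; field; rewrite lt0r_neq0.
by rewrite ler_nat.
Qed.

End Threshold.

Lemma round_clustering_first (R : realFieldType) (V : finType) (k : nat)
  (x : V -> 'I_k -> R) (t : R) (dflt : V -> 'I_k) (s : {perm 'I_k}) v c :
  x v c < t -> (forall c', x v c' < t -> (s c <= s c')%N) ->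
  round_clustering x t dflt s v = c.
Proof.
move=> xvc c_first; rewrite /round_clustering.
case: pickP => [c0 /andP [xvc0 /forall_inP c0_first] | none].
  apply: (@perm_inj _ s); apply: val_inj; apply/eqP.
  by rewrite /= eqn_leq c0_first // c_first.
have := none c; rewrite xvc /=.
by have -> : [forall c', (x v c' < t) ==> (s c <= s c')%N] by apply/forall_inP.
Qed.

Section Rounding.
Variables (R : realFieldType) (V E : finType) (k : nat) (edge : E -> {set V})
  (lab : E -> 'I_k) (x : V -> 'I_k -> R) (xe : E -> R).
Hypothesis feas : LP_feasible edge lab x xe.
Hypothesis k_gt0 : (0 < k)%N.
Hypothesis edge_neq0 : forall e, edge e != set0.

Lemma sum_one_sub_x v : \sum_c (1 - x v c) = 1.
Proof.
case: feas => sum_x _ _ _.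
by rewrite sumrB sum_x sumr_const card_ord natrB // -mulr_natr mul1r opprB addrC subrK.
Qed.

Lemma sum_one_sub_x_le1 v (s : seq 'I_k) : uniq s -> \sum_(c <- s) (1 - x v c) <= 1.
Proof.
move=> s_uniq; rewrite big_uniq // -[leRHS](sum_one_sub_x v).
rewrite [leRHS](bigID (mem s)) /= lerDl; apply: sumr_ge0 => c _.
by case: feas => _ _ x_bounds _; rewrite subr_ge0; case/andP: (x_bounds v c).
Qed.

Lemma one_sub_x_pair v c1 c2 : c1 != c2 -> (1 - x v c1) + (1 - x v c2) <= 1.
Proof.
move=> n12; have := @sum_one_sub_x_le1 v [:: c1; c2].
by rewrite !big_cons big_nil addr0; apply; rewrite /= inE n12.
Qed.

Lemma one_sub_x_triple v c1 c2 c3 : c1 != c2 -> c1 != c3 -> c2 != c3 ->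
  (1 - x v c1) + (1 - x v c2) + (1 - x v c3) <= 1.
Proof.
move=> n12 n13 n23; have := @sum_one_sub_x_le1 v [:: c1; c2; c3].
by rewrite !big_cons big_nil addr0 addrA; apply; rewrite /= !inE negb_or n12 n13 n23.
Qed.

Definition touching (t : R) (e : E) : {set 'I_k} :=
  [set c | [exists v in edge e, x v c < t]].

Lemma x_lab_lt t e v : xe e < t -> v \in edge e -> x v (lab e) < t.
Proof.
by case: feas => _ x_le_xe _ _ lt_t ve; apply: le_lt_trans (x_le_xe e v ve) lt_t.
Qed.

Lemma lab_touching t e : xe e < t -> lab e \in touching t e.
Proof.
move=> lt_t; case/set0Pn: (edge_neq0 e) => v ve.
by rewrite inE; apply/existsP; exists v; rewrite ve x_lab_lt.
Qed.

Lemma one_subr_lt_xe t e c : c \in touching t e -> c != lab e -> 1 - t < xe e.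
Proof.
rewrite inE => /exists_inP [v ve xvc] nc.
have := one_sub_x_pair v nc; case: feas => _ x_le_xe _ _.
have := x_le_xe e v ve; lra.
Qed.

Lemma card_touching_le_size t e : xe e < t -> 3 * t <= 2 ->
  (#|touching t e| <= #|edge e|.+1)%N.
Proof.
move=> lt_t t_le; set D := touching t e.
rewrite (cardsD1 (lab e) D) lab_touching // add1n ltnS.
case/set0Pn: (edge_neq0 e) => v0 _.
pose f c := if [pick v in edge e | x v c < t] is Some v then v else v0.
have fP c : c \in D -> f c \in edge e /\ x (f c) c < t.
  rewrite inE => /exists_inP [w we xwc]; rewrite /f.
  case: pickP => [v /andP [ve xvc] | none] //.
  by have := none w; rewrite we xwc.
have f_inj : {in D :\ lab e &, injective f}.
  move=> c1 c2 /setD1P [n1 /fP [ve xc1]] /setD1P [n2 /fP [_ xc2]] f12.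
  apply/eqP; apply: contraT => n12; rewrite -f12 in xc2.
  have := one_sub_x_triple (f c1) n12 n1 n2.
  by have := x_lab_lt lt_t ve; lra.
rewrite -(card_in_imset f_inj); apply: subset_leq_card.
by apply/subsetP => _ /imsetP [c /setD1P [_ /fP [ve _]] ->].
Qed.

Lemma mY_le1 Y e : (mY edge lab Y e <= 1)%N.
Proof. by rewrite /mY; case: ifP. Qed.

Lemma mY_round_first t dflt s e : xe e < t ->
  s \in first_in (touching t e) (lab e) ->
  mY edge lab (round_clustering x t dflt s) e = 0%N.
Proof.
move=> lt_t; rewrite inE => /forall_inP lab_first.
rewrite /mY; case: exists_inP => // -[v ve /eqP []].
apply: round_clustering_first (x_lab_lt lt_t ve) _ => c xvc.
by apply: lab_first; rewrite inE; apply/exists_inP; exists v.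
Qed.

Definition cut_count t (dflt : {perm 'I_k} -> V -> 'I_k) e : nat :=
  \sum_(s : {perm 'I_k}) mY edge lab (round_clustering x t (dflt s) s) e.

Lemma cut_count_le_fact t dflt e : (cut_count t dflt e <= k`!)%N.
Proof.
rewrite -card_Sn -sum1_card; apply: leq_sum => s _; exact: mY_le1.
Qed.

Lemma cut_count_add_first_in t dflt e : xe e < t ->
  (cut_count t dflt e + #|first_in (touching t e) (lab e)| <= k`!)%N.
Proof.
move=> lt_t; rewrite -card_Sn -!sum1_card [X in (_ + X)%N]big_mkcond.
rewrite -big_split /=; apply: leq_sum => s _.
by case: ifP => [/(mY_round_first _ lt_t) -> | _]; rewrite ?addn0 ?mY_le1.
Qed.

Lemma card_touching_mul_cut_count t dflt e : xe e < t ->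
  (#|touching t e| * cut_count t dflt e <= (#|touching t e|).-1 * k`!)%N.
Proof.
move=> lt_t; have lab_D := lab_touching lt_t.
have := fact_le_card_first_in lab_D; have := cut_count_add_first_in dflt lt_t.
have : (0 < #|touching t e|)%N by apply/card_gt0P; exists (lab e).
nia.
Qed.

Lemma cut_count_eq0 t dflt e : xe e < t -> xe e <= 1 - t -> cut_count t dflt e = 0%N.
Proof.
move=> lt_t xe_le; have := card_touching_mul_cut_count dflt lt_t.
suff -> : #|touching t e| = 1%N by rewrite mul1n mul0n leqn0 => /eqP.
apply/eqP; rewrite (cardsD1 (lab e)) lab_touching // add1n eqSS cards_eq0.
apply/eqP/setP => c; rewrite in_set0; apply/negP => /setD1P [nc cD].
by have := one_subr_lt_xe cD nc; lra.
Qed.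

Lemma cut_count_mul_le n t dflt e : xe e < t -> (#|touching t e| <= n)%N ->
  (n * cut_count t dflt e <= n.-1 * k`!)%N.
Proof.
move=> lt_t; have := card_touching_mul_cut_count dflt lt_t.
have : (0 < #|touching t e|)%N by apply/card_gt0P; exists (lab e); apply: lab_touching.
set D := touching t e; set m := cut_count _ _ _ => D_gt0 Dm D_le.
have : ((n - #|D|) * m <= (n - #|D|) * k`!)%N by rewrite leq_mul2l cut_count_le_fact orbT.
nia.
Qed.

Lemma cut_count_le_xe n dflt e : (0 < n)%N ->
  (xe e < threshold R n -> (#|touching (threshold R n) e| <= n)%N) ->
  (cut_count (threshold R n) dflt e)%:R <= k`!%:R * approx_ratio R n * xe e.
Proof.
move=> n_gt0 card_le; set t := threshold R n; set m := cut_count t dflt e.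
have a_ge0 : 0 <= approx_ratio R n by apply: le_trans (approx_ratio_ge1 R n_gt0).
have xe_ge0 : 0 <= xe e by case: feas => _ _ _ /(_ e) /andP [].
rewrite -mulrA mulrC; case: (lerP t (xe e)) => [t_le | lt_t].
  have m_le : m%:R <= 1 * k`!%:R :> R by rewrite mul1r ler_nat cut_count_le_fact.
  apply: le_trans m_le _; rewrite ler_wpM2r // -(approx_ratio_threshold R n_gt0).
  by rewrite ler_wpM2l.
have [xe_le | lt_xe] := lerP (xe e) (1 - t).
  by rewrite /m cut_count_eq0 // !mulr_ge0.
have := natr_le_one_sub_inv_mul R n_gt0 (cut_count_mul_le dflt lt_t (card_le lt_t)).
rewrite -(approx_ratio_one_sub_threshold R n_gt0) => m_le.
by apply: le_trans m_le _; rewrite ler_wpM2r // ler_wpM2l // ltW.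
Qed.

End Rounding.

Lemma indicator_LP_feasible (R : realFieldType) (V E : finType) (k : nat)
  (edge : E -> {set V}) (lab : E -> 'I_k) (Y : V -> 'I_k) :
  LP_feasible edge lab (fun v c => (c != Y v)%:R : R)
    (fun e => (mY edge lab Y e)%:R).
Proof.
split=> [v | e v ve | v c | e].
- rewrite -natr_sum subn1 -[in RHS](card_ord k) -(cardC1 (Y v)) -sum1_card.
  by congr _%:R; rewrite [RHS]big_mkcond; apply: eq_bigr => c _; rewrite inE.
- rewrite /= ler_nat /mY; case: exists_inP => [_ | no_witness].
    by case: (_ != _).
  by case: eqP => // /eqP lab_ne; case: no_witness; exists v; rewrite 1?eq_sym.
- by case: (c != Y v); rewrite ?ler01 ?lexx.
- by rewrite /mY; case: ifP; rewrite ?ler01 ?lexx.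
Qed.

Lemma LP_optimal_le_CatEdgeClus (R : realFieldType) (V E : finType) (k : nat)
  (edge : E -> {set V}) (lab : E -> 'I_k) (x : V -> 'I_k -> R) (xe : E -> R)
  (Y : V -> 'I_k) :
  LP_optimal edge lab x xe -> \sum_e xe e <= (CatEdgeClus edge lab Y)%:R.
Proof.
by case=> _ opt; rewrite natr_sum; apply/opt/indicator_LP_feasible.
Qed.

Lemma expected_cost_le (R : realFieldType) (V E : finType) (k : nat)
  (edge : E -> {set V}) (lab : E -> 'I_k) (x : V -> 'I_k -> R) (xe : E -> R)
  (dflt : {perm 'I_k} -> V -> 'I_k) (n : nat) (Y : V -> 'I_k) :
  (0 < k)%N -> (forall e, edge e != set0) -> LP_optimal edge lab x xe ->
  (0 < n)%N ->
  (forall e, xe e < threshold R n -> (#|touching edge x (threshold R n) e| <= n)%N) ->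
  expected_cost edge lab x (threshold R n) dflt
    <= approx_ratio R n * (CatEdgeClus edge lab Y)%:R.
Proof.
move=> k_gt0 edge_neq0 opt n_gt0 card_le.
have K_gt0 : 0 < k`!%:R :> R by rewrite ltr0n fact_gt0.
rewrite /expected_cost ler_pdivrMl // mulrA.
apply: le_trans (ler_wpM2l _ (LP_optimal_le_CatEdgeClus Y opt)); last first.
  by apply: mulr_ge0; [exact: ltW | exact: le_trans ler01 (approx_ratio_ge1 R n_gt0)].
rewrite /CatEdgeClus; under eq_bigr do rewrite natr_sum.
rewrite exchange_big mulr_sumr; apply: ler_sum => e _.
rewrite -natr_sum.
exact: (cut_count_le_xe opt.1 k_gt0 edge_neq0 dflt n_gt0 (card_le e)).
Qed.

Theorem mainTheorem6 (R : realFieldType) (V E : finType) (k : nat)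
  (edge : E -> {set V}) (lab : E -> 'I_k)
  (x : V -> 'I_k -> R) (xe : E -> R)
  (dflt : {perm 'I_k} -> V -> 'I_k) :
  (2 <= k)%N ->
  (forall e, edge e != set0) ->
  (2 <= max_edge_size edge)%N ->
  LP_optimal edge lab x xe ->
  (forall Y' : V -> 'I_k,
     expected_cost edge lab x (k%:R / (2 * k - 1)%:R) dflt
       <= (2 - 1 / k%:R) * (CatEdgeClus edge lab Y')%:R) /\
  (forall Y' : V -> 'I_k,
     expected_cost edge lab x
       ((max_edge_size edge + 1)%:R / (2 * max_edge_size edge + 1)%:R) dflt
       <= (2 - 1 / (max_edge_size edge + 1)%:R) * (CatEdgeClus edge lab Y')%:R).
Proof.
move=> k_ge2 edge_neq0 r_ge2 opt; have k_gt0 := ltnW k_ge2.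
split=> Y'.
  apply: (expected_cost_le dflt Y' k_gt0 edge_neq0 opt k_gt0) => e _.
  by rewrite -[X in (_ <= X)%N]card_ord max_card.
set r := max_edge_size edge.
have -> : (2 * r + 1 = 2 * (r + 1) - 1)%N by lia.
have r1_gt0 : (0 < r + 1)%N by rewrite addn1.
apply: (expected_cost_le dflt Y' k_gt0 edge_neq0 opt r1_gt0) => e lt_t.
have t_le : 3 * threshold R (r + 1) <= 2.
  rewrite /threshold mulrA ler_pdivrMr ?ltr0n; last by lia.
  by rewrite -!natrM ler_nat; lia.
apply: leq_trans (card_touching_le_size opt.1 k_gt0 edge_neq0 lt_t t_le) _.
by rewrite addn1 ltnS leq_bigmax.
Qed.
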